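(* Let $K$ be a field of odd characteristic $p$ with algebraic closure $\bar K$. Suppose that $f\in K[X]$ satisfies $f\sim_{\bar K} X^p-2X^{(p+1)/2}+X$. Then $f\sim_K X^p-2aX^{(p+1)/2}+a^2X$ for some $a\in K$.
   Context: For a field extension $E$ of $K$ and $f,h\in K[X]$ (or $h\in E[X]$), write $f\sim_E h$ if there are polynomials $L,R\in E[X]$ of degree $1$ with $f(X)=L(h(R(X)))$. *)

From HB Require Import structures.
From mathcomp Require Import all_boot all_order all_algebra.
Set Implicit Arguments. Unset Strict Implicit. Unset Printing Implicit Defensive.
Import GRing.Theory.
Local Open Scope ring_scope.

Definition lin_equiv (E : fieldType) (f h : {poly E}) : Prop :=
  exists L R : {poly E},
    [/\ size L = 2%N, size R = 2%N & f = L \Po (h \Po R)].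

Definition pfam (E : fieldType) (p : nat) (a : E) : {poly E} :=
  'X^p - (2 * a) *: 'X^(p.+1./2) + (a ^+ 2) *: 'X.

From HB Require Import structures.
From mathcomp Require Import all_boot all_order all_algebra.
From mathcomp Require Import ring.
Set Implicit Arguments. Unset Strict Implicit. Unset Printing Implicit Defensive.
Import GRing.Theory.
Local Open Scope ring_scope.

(* Write p = 2m + 1. Over L, rescaling X absorbs the leading coefficient of the
   inner linear map, so the hypothesis says iota(f) = (mu X + d) o pfam p a o (X + c)
   with mu a != 0. In characteristic p the derivative of such a polynomial is
   mu (a^2 - a (X + c)^m), so mu, a, c and d are given by explicit rational
   expressions in the coefficients of the polynomial. These expressions commute
   with the embedding iota, so evaluated on f they give parameters in K, and
   injectivity of iota on polynomials transports the identity back to K. *)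

Lemma coef_exp_XaddC (R : comNzRingType) (c : R) n k :
  (('X + c%:P) ^+ n)`_k = c ^+ (n - k) *+ 'C(n, k).
Proof.
elim: n k => [|n IHn] k; first by rewrite expr0 coef1; case: k.
case: k => [|k].
  by rewrite exprS mulrDl coefD coefXM coefCM IHn !bin0 !subn0 !mulr1n add0r exprS.
rewrite exprS mulrDl coefD coefXM coefCM !IHn binS mulrnDr addrC subSS; congr (_ + _).
have [ltkn | lenk] := ltnP k n; first by rewrite mulrnAr -exprS subnSK.
by rewrite bin_small ?mulr0n ?mulr0.
Qed.

Lemma poly_size2E (R : nzRingType) (q : {poly R}) :
  size q = 2 -> q`_1 != 0 /\ q = q`_1 *: 'X + (q`_0)%:P.
Proof.
move=> sq; split.
  by have := lead_coef_eq0 q; rewrite lead_coefE sq -size_poly_eq0 sq => ->.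
apply/polyP => -[|[|i]]; rewrite coefD coefZ coefX coefC ?mulr0 ?mulr1 ?add0r ?addr0 //.
by rewrite nth_default // sq.
Qed.

Lemma size_ZXaddC (R : nzRingType) (a b : R) : a != 0 -> size (a *: 'X + b%:P) = 2.
Proof. by move=> a0; rewrite -mul_polyC size_MXaddC polyC_eq0 (negbTE a0) size_polyC a0. Qed.

(* If g = (mu X + d) o pfam p a o (X + c) in characteristic p = 2m + 1, then
   g_p = mu, g' = mu (a^2 - a (X + c)^m), hence (g')_m = - mu a, the polynomial
   a - g' / (mu a) is (X + c)^m with X^(m-1) coefficient m c, and g(-c) = d. *)
Definition pfam_lead (E : fieldType) (p : nat) (g : {poly E}) : E := g`_p.

Definition pfam_param (E : fieldType) (p : nat) (g : {poly E}) : E :=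
  - (g^`())`_(p./2) / pfam_lead p g.

Definition pfam_shift (E : fieldType) (p : nat) (g : {poly E}) : E :=
  let a := pfam_param p g in
  ((a%:P - (pfam_lead p g * a)^-1 *: g^`())`_(p./2).-1) / (p./2)%:R.

Definition pfam_const (E : fieldType) (p : nat) (g : {poly E}) : E :=
  g.[- pfam_shift p g].

Definition pfam_nf (E : fieldType) (p : nat) (g : {poly E}) : {poly E} :=
  (pfam_lead p g *: 'X + (pfam_const p g)%:P)
    \Po (pfam p (pfam_param p g) \Po ('X + (pfam_shift p g)%:P)).

Section MapPfam.
Variables (K L : fieldType) (iota : {rmorphism K -> L}) (p : nat).

Lemma map_pfam (a : K) : map_poly iota (pfam p a) = pfam p (iota a).
Proof.
by rewrite /pfam rmorphD rmorphB /= !map_polyZ !map_polyXn map_polyX rmorphM rmorphXn rmorph_nat.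
Qed.

Lemma map_pfam_nf (g : {poly K}) : map_poly iota (pfam_nf p g) = pfam_nf p (map_poly iota g).
Proof.
have lead : iota (pfam_lead p g) = pfam_lead p (map_poly iota g) by rewrite /pfam_lead coef_map.
have param : iota (pfam_param p g) = pfam_param p (map_poly iota g).
  by rewrite /pfam_param fmorph_div rmorphN -lead deriv_map coef_map.
have shift : iota (pfam_shift p g) = pfam_shift p (map_poly iota g).
  rewrite /pfam_shift fmorph_div rmorph_nat -coef_map rmorphB /= (map_polyC iota) (map_polyZ iota).
  by rewrite fmorphV rmorphM -lead -param deriv_map.
have const : iota (pfam_const p g) = pfam_const p (map_poly iota g).
  by rewrite /pfam_const -horner_map rmorphN shift.
rewrite /pfam_nf !map_comp_poly map_pfam map_polyXaddC -param -shift; congr (_ \Po _).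
by rewrite rmorphD /= (map_polyZ iota) map_polyX (map_polyC iota) -lead -const.
Qed.

End MapPfam.

Section OddPfam.
Variables (E : fieldType) (p : nat).
Hypothesis odd_p : odd p.
Local Notation m := p./2.

Let p_double : p = m.*2.+1.
Proof. by rewrite -[in LHS](odd_double_half p) odd_p. Qed.

Let expr_odd (x : E) : x ^+ p = x * (x ^+ m) ^+ 2.
Proof. by rewrite -exprM muln2 -exprS -p_double. Qed.

Lemma pfam_comp_scale (a r : E) :
  r != 0 -> pfam p a \Po (r *: 'X) = r ^+ p *: pfam p (a / r ^+ m).
Proof.
move=> r0; rewrite /pfam -uphalfE uphalf_half odd_p comp_polyD comp_polyB !comp_polyZ.
rewrite !comp_Xn_poly comp_polyX !exprZn scalerDr scalerBr !scalerA expr_odd add1n (exprS r m).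
by congr (_ - _ *: _ + _ *: _); field; rewrite expf_neq0.
Qed.

Lemma lin_equiv_pfam (g : {poly E}) (a : E) : a != 0 -> lin_equiv g (pfam p a) ->
  exists (mu b c d : E),
    [/\ mu != 0, b != 0 & g = (mu *: 'X + d%:P) \Po (pfam p b \Po ('X + c%:P))].
Proof.
move=> a0 [Lq [Rq [/poly_size2E[l_neq0 ->] /poly_size2E[r_neq0 ->] ->]]].
set r := Rq`_1; set c := Rq`_0 / r.
exists (Lq`_1 * r ^+ p), (a / r ^+ m), c, Lq`_0.
split; [by rewrite mulf_neq0 ?expf_neq0 | by rewrite mulf_neq0 ?invr_eq0 ?expf_neq0 |].
have -> : r *: 'X + (Rq`_0)%:P = (r *: 'X) \Po ('X + c%:P).
  by rewrite comp_polyZ comp_polyX scalerDr scale_polyC mulrC divfK.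
rewrite [pfam p a \Po _]comp_polyA pfam_comp_scale // comp_polyZ.
by rewrite !comp_polyD !comp_polyZ !comp_polyX !comp_polyC scalerA.
Qed.

Section OddChar.
Hypothesis charE : p \in [pchar E].

Let pchar_gt1 : (1 < p)%N.
Proof. exact: prime_gt1 (pcharf_prime charE). Qed.

Lemma half_pchar_gt0 : (0 < m)%N.
Proof. by move: pchar_gt1; rewrite p_double; case: (m). Qed.

Let half_succ_lt : (m.+1 < p)%N.
Proof. by rewrite [in X in (_ < X)%N]p_double ltnS -addnn -addn1 leq_add2l half_pchar_gt0. Qed.

Lemma half_pchar_neq0 : m%:R != 0 :> E.
Proof. by rewrite -(dvdn_pcharf charE) gtnNdvd ?half_pchar_gt0 // (ltnW half_succ_lt). Qed.

Let two_half_succ : 2 * m.+1%:R = 1 :> E.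
Proof. by rewrite -natrM mul2n doubleS -p_double -addn1 natrD pcharf0 // add0r. Qed.

Lemma deriv_pfam (a : E) : (pfam p a)^`() = (a ^+ 2)%:P - a *: 'X^m.
Proof.
rewrite /pfam !derivE -!scaler_nat pcharf0 // scale0r add0r -uphalfE uphalf_half odd_p /=.
by rewrite scalerA -mulrA add1n add0n mulrCA two_half_succ mulr1 alg_polyC addrC.
Qed.

Section NormalFormOfComp.
Variables (mu a c d : E).
Hypotheses (mu0 : mu != 0) (a0 : a != 0).
Let g := (mu *: 'X + d%:P) \Po (pfam p a \Po ('X + c%:P)).

Let gE : g = mu *: (pfam p a \Po ('X + c%:P)) + d%:P.
Proof. by rewrite /g comp_polyD comp_polyZ comp_polyX comp_polyC. Qed.

Lemma pfam_lead_comp : pfam_lead p g = mu.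
Proof.
rewrite /pfam_lead gE /pfam -uphalfE uphalf_half odd_p comp_polyD comp_polyB !comp_polyZ.
rewrite !comp_Xn_poly comp_polyX !(coefD, coefN, coefZ, coefC, coefX, coef_exp_XaddC).
rewrite add1n (bin_small half_succ_lt) subnn binn (gtn_eqF pchar_gt1) (gtn_eqF (ltnW pchar_gt1)) /=.
by rewrite expr0 mulr1n !mulr0n !(mulr0, addr0, subr0) mulr1.
Qed.

Lemma deriv_pfam_comp : g^`() = mu *: ((a ^+ 2)%:P - a *: ('X + c%:P) ^+ m).
Proof.
have dXc : ('X + c%:P)^`() = 1 by rewrite derivD derivX derivC addr0.
rewrite gE derivD derivC addr0 derivZ deriv_comp dXc mulr1.
by rewrite deriv_pfam comp_polyB comp_polyC comp_polyZ comp_Xn_poly.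
Qed.

Lemma pfam_param_comp : pfam_param p g = a.
Proof.
rewrite /pfam_param pfam_lead_comp deriv_pfam_comp coefZ coefB coefC coefZ coef_exp_XaddC.
by rewrite subnn binn (gtn_eqF half_pchar_gt0) expr0 mulr1n mulr1 sub0r mulrN opprK mulrC mulKf.
Qed.

Lemma pfam_shift_comp : pfam_shift p g = c.
Proof.
rewrite /pfam_shift pfam_param_comp pfam_lead_comp deriv_pfam_comp scalerA scalerBr scale_polyC scalerA.
have -> : (mu * a)^-1 * mu * a ^+ 2 = a by field; rewrite a0 mu0.
have -> : (mu * a)^-1 * mu * a = 1 by field; rewrite a0 mu0.
rewrite scale1r opprB addrC subrK coef_exp_XaddC -subn1 bin_sub ?bin1 ?subKn ?half_pchar_gt0 //.
by rewrite -mulr_natr mulfK ?half_pchar_neq0.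
Qed.

Lemma pfam_const_comp : pfam_const p g = d.
Proof.
rewrite /pfam_const pfam_shift_comp gE !hornerE horner_comp !hornerE addNr /pfam !hornerE.
by rewrite -uphalfE uphalf_half odd_p !expr0n (gtn_eqF (ltnW pchar_gt1)) /= !(mulr0, subr0) add0r.
Qed.

Lemma pfam_nf_comp : pfam_nf p g = g.
Proof. by rewrite /pfam_nf pfam_lead_comp pfam_param_comp pfam_shift_comp pfam_const_comp. Qed.

End NormalFormOfComp.

End OddChar.

End OddPfam.

Theorem lemma2p9 (K : fieldType) (p : nat) (L : closedFieldType)
    (iota : {rmorphism K -> L}) :
  p \in [pchar K] -> odd p ->
  (forall x : L, exists2 q : {poly K}, q != 0 & root (map_poly iota q) x) ->
  forall f : {poly K},
    lin_equiv (map_poly iota f) (pfam p (1 : L)) ->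
    exists a : K, lin_equiv f (pfam p a).
Proof.
move=> charK odd_p _ f /(lin_equiv_pfam odd_p (oner_neq0 L))[mu [a [c [d [mu0 a0 f_eq]]]]].
have charL : p \in [pchar L] by rewrite (fmorph_pchar iota).
have nf_f : pfam_nf p f = f.
  by apply: (map_poly_inj iota); rewrite map_pfam_nf f_eq pfam_nf_comp.
have lead_f : pfam_lead p f != 0.
  by rewrite -(fmorph_eq0 iota) /pfam_lead -coef_map -/(pfam_lead _ _) f_eq pfam_lead_comp.
exists (pfam_param p f), (pfam_lead p f *: 'X + (pfam_const p f)%:P), ('X + (pfam_shift p f)%:P).
by split; [exact: size_ZXaddC | exact: size_XaddC | rewrite -[LHS]nf_f].
Qed.
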